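(* Let $\mathcal{D}=(X,\mathcal{B})$ be a $(v,k,\lambda)$ symmetric design of order $q=k-\lambda\geq 2$ and let $\Gamma_\mathcal{D}$ be its incidence graph. Then there exists a split resolving set for $\Gamma_\mathcal{D}$ of size $2\cdot\left\lceil\frac{v\log v}{k-\lambda}\right\rceil$.
   Context: A symmetric design with parameters $(v,k,\lambda)$ is a pair $(X,\mathcal{B})$ where $X$ is a set of $v$ points and $\mathcal{B}$ is a family of $k$-subsets of $X$ (blocks) such that any two distinct points lie in exactly $\lambda$ blocks and any two distinct blocks meet in exactly $\lambda$ points. Its order is $q=k-\lambda$. The incidence graph $\Gamma_\mathcal{D}$ is the bipartite graph on $X\cup\mathcal{B}$ with $x$ adjacent to $B$ iff $x\in B$. For a bipartite graph with bipartition $X\cup Y$, a split resolving set is a set $S=S_X\cup S_Y$ with $S_X\subseteq X$, $S_Y\subseteq Y$, such that any two distinct vertices of $X$ are at different distances from some vertex of $S_Y$, and any two distinct vertices of $Y$ are at different distances from some vertex of $S_X$. $\log$ is the natural logarithm. *)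

From HB Require Import structures.
From mathcomp Require Import all_boot all_order all_algebra.
From mathcomp Require Import all_classical all_reals all_analysis.
Set Implicit Arguments. Unset Strict Implicit. Unset Printing Implicit Defensive.
Import Order.TTheory GRing.Theory Num.Theory.

Definition symmetric_design (X : finType) (B : {set {set X}}) (v k lam : nat) : Prop :=
  [/\ #|X| = v, #|B| = v,
      (forall Y, Y \in B -> #|Y| = k),
      (forall x1 x2 : X, x1 != x2 ->
          #|[set Y in B | (x1 \in Y) && (x2 \in Y)]| = lam)
    & (forall Y1 Y2, Y1 \in B -> Y2 \in B -> Y1 != Y2 -> #|Y1 :&: Y2| = lam)].

(* Sets that are not blocks are isolated
   vertices, so they do not affect distances among points and blocks. *)
Definition inc_vertex (X : finType) : finType := (X + {set X})%type.

Definition inc_adj (X : finType) (B : {set {set X}}) : rel (inc_vertex X) :=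
  fun u w =>
    match u, w with
    | inl x, inr Y => (Y \in B) && (x \in Y)
    | inr Y, inl x => (Y \in B) && (x \in Y)
    | _, _ => false
    end.

Definition walk_n (X : finType) (B : {set {set X}}) (n : nat) (u w : inc_vertex X) : bool :=
  [exists p : n.-tuple (inc_vertex X), path (inc_adj B) u p && (last u p == w)].

(* graph distance; equals #|V| (acting as "infinity") if w is unreachable
   from u, since any finite distance is < #|V|. *)
Definition inc_dist (X : finType) (B : {set {set X}}) (u w : inc_vertex X) : nat :=
  find (fun n => walk_n B n u w) (iota 0 #|inc_vertex X|).

Definition split_resolving (X : finType) (B : {set {set X}})
    (SX : {set X}) (SY : {set {set X}}) : Prop :=
  [/\ SY \subset B,
      (forall x1 x2 : X, x1 != x2 -> exists2 Y, Y \in SY &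
          inc_dist B (inl x1) (inr Y) != inc_dist B (inl x2) (inr Y))
    & (forall Y1 Y2, Y1 \in B -> Y2 \in B -> Y1 != Y2 -> exists2 x, x \in SX &
          inc_dist B (inr Y1) (inl x) != inc_dist B (inr Y2) (inl x))].

From mathcomp Require Import all_boot all_order all_algebra.
From mathcomp Require Import unstable reals sequences exp.
From mathcomp Require Import zify ring lra.
Set Implicit Arguments. Unset Strict Implicit. Unset Printing Implicit Defensive.
Import Order.TTheory GRing.Theory Num.Theory.

(* In the incidence graph a point and a block are at distance 1 exactly when
   they are incident, so a point resolves two blocks as soon as it lies in
   exactly one of them, and dually.  In a symmetric design of order q two
   distinct blocks have a symmetric difference of size 2q, and so do the block
   sets through two distinct points.  A uniformly random c-tuple of points
   misses a fixed set of size 2q with probability (1 - 2q/v)^c <= exp(-2qc/v),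
   which is at most 1/v^2 for c = ceil(v log v / q); the union bound over
   fewer than v^2 pairs then yields c points resolving all blocks, and
   dually c blocks resolving all points.  Since v <= q^2 + q + 1 <= e^q, we
   have c <= v, so both sets can be padded to exactly c elements. *)

Lemma exists_small_hitting_set (T I : finType) (U : {set T}) (P : {set I})
    (D : I -> {set T}) (m c : nat) :
  (forall i, i \in P -> D i \subset U /\ m <= #|D i|) ->
  #|P| * (#|U| - m) ^ c < #|U| ^ c ->
  exists2 S : {set T}, S \subset U /\ #|S| <= c &
    forall i, i \in P -> exists2 x, x \in S & x \in D i.
Proof.
move=> hD count.
pose avoiding i := [set f : {ffun 'I_c -> T} | f \in ffun_on (U :\: D i)].
have card_avoiding i : i \in P -> #|avoiding i| <= (#|U| - m) ^ c.
  move=> Pi; have [sDU leDm] := hD i Pi.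
  rewrite cardsE card_ffun_on card_ord cardsD (setIidPr sDU).
  by case: c {count avoiding} => // c; rewrite leq_exp2r // leq_sub2l.
have : ~~ ([set f | f \in ffun_on U] \subset \bigcup_(i in P) avoiding i).
  apply: contraTN count => /subset_leq_card; rewrite cardsE card_ffun_on card_ord.
  move=> /leq_trans/(_ (card_big_setU _ _ _)) le_sum; rewrite -leqNgt.
  by apply: leq_trans le_sum _; rewrite -sum_nat_const; apply: leq_sum card_avoiding.
case/subsetPn => f; rewrite inE => /ffun_onP fU /bigcupP f_hits.
exists [set f j | j : 'I_c]; first split.
- by apply/subsetP => _ /imsetP[j _ ->].
- by rewrite (leq_trans (leq_imset_card _ _)) ?card_ord.
- move=> i Pi.
  have : f \notin avoiding i by apply/negP => f_avoids; apply: f_hits; exists i.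
  rewrite inE => /ffun_onP/forallP; rewrite negb_forall => /existsP[j].
  rewrite !inE fU andbT negbK => fj_in_D.
  by exists (f j); first exact: imset_f.
Qed.

Lemma exists_between_card (T : finType) (S U : {set T}) (c : nat) :
  S \subset U -> #|S| <= c <= #|U| ->
  exists2 S' : {set T}, S \subset S' & S' \subset U /\ #|S'| = c.
Proof.
move=> sSU; elim: c => [|c IHc] /andP[leSc lecU].
  by exists S => //; split => //; apply/eqP; rewrite -leqn0.
have [eqSc | neSc] := eqVneq #|S| c.+1; first by exists S.
have [S' sSS' [sS'U cardS']] :
    exists2 S' : {set T}, S \subset S' & S' \subset U /\ #|S'| = c.
  by apply: IHc; rewrite -ltnS ltn_neqAle neSc leSc ltnW.
have /properP[_ [x xU xS']] : S' \proper U by rewrite properEcard sS'U cardS'.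
exists (x |: S'); first exact: subset_trans sSS' (subsetUr _ _).
by rewrite subUset sub1set xU sS'U cardsU1 xS' cardS'.
Qed.

Definition symdiff (T : finType) (A1 A2 : {set T}) : {set T} :=
  (A1 :\: A2) :|: (A2 :\: A1).

Lemma in_symdiff (T : finType) (A1 A2 : {set T}) (x : T) :
  (x \in symdiff A1 A2) = ((x \in A1) != (x \in A2)).
Proof. by rewrite !inE; case: (x \in A1); case: (x \in A2). Qed.

Lemma card_symdiff (T : finType) (A1 A2 : {set T}) (k l : nat) :
  #|A1| = k -> #|A2| = k -> #|A1 :&: A2| = l -> #|symdiff A1 A2| = 2 * (k - l).
Proof.
move=> cardA1 cardA2 cardI; rewrite /symdiff cardsU.
have -> : (A1 :\: A2) :&: (A2 :\: A1) = set0.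
  by apply/setP => x; rewrite !inE; case: (x \in A1); case: (x \in A2).
by rewrite cards0 subn0 !cardsD cardA1 cardA2 cardI setIC cardI; lia.
Qed.

Definition offdiag (T : finType) (A : {set T}) : {set T * T} :=
  [set p in setX A A | p.1 != p.2].

Lemma card_offdiag_lt (T : finType) (A : {set T}) :
  0 < #|A| -> #|offdiag A| < #|A| * #|A|.
Proof.
case/card_gt0P=> a Aa; rewrite -cardsX proper_card //; apply/properP; split.
  by apply/subsetP => p; rewrite inE => /andP[].
by exists (a, a); rewrite !inE ?Aa ?eqxx.
Qed.

Lemma card_in_set_sum (T : finType) (A : {set T}) (P : pred T) :
  #|[set x in A | P x]| = \sum_(x in A) P x.
Proof.
rewrite -sum1_card big_mkcond [RHS]big_mkcond; apply: eq_bigr => x _.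
by rewrite inE; case: (x \in A); case: (P x).
Qed.

Lemma double_count (I J : finType) (A : {set I}) (C : {set J}) (r : I -> J -> bool) :
  \sum_(i in A) #|[set j in C | r i j]| = \sum_(j in C) #|[set i in A | r i j]|.
Proof.
under eq_bigr do rewrite card_in_set_sum.
by rewrite exchange_big; under [RHS]eq_bigr do rewrite card_in_set_sum.
Qed.

(* With lam' := v + lam - 2k, the parameter of the complementary design, the
   identity k(k-1) = lam(v-1) becomes lam * lam' = q(q-1) for q = k - lam. *)
Lemma le_order_of_params (v k lam : nat) :
  k * (k - 1) = lam * (v - 1) -> lam + 2 <= k -> 2 * k <= v + lam ->
  v <= (k - lam) * (k - lam) + (k - lam) + 1.
Proof.
move=> params q_ge2 le_2k.
have [q def_k] : exists q, k = lam + q by exists (k - lam); lia.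
have [lam' def_v] : exists lam', v = lam + lam' + 2 * q.
  by exists (v - lam - 2 * q); lia.
subst k v; rewrite addKn.
have {}params : lam * lam' = q * (q - 1) by nia.
have [lam_gt0 lam'_gt0] : 0 < lam /\ 0 < lam'.
  by split; apply: contraTT q_ge2; rewrite -leqNgt leqn0 => /eqP eq0; nia.
nia.
Qed.

Definition blocks_through (X : finType) (B : {set {set X}}) (x : X) : {set {set X}} :=
  [set Y in B | x \in Y].

Section SymmetricDesign.

Variables (X : finType) (B : {set {set X}}) (v k lam : nat).
Hypothesis design : symmetric_design B v k lam.

Lemma card_blocks_through_inter (x1 x2 : X) : x1 != x2 ->
  #|blocks_through B x1 :&: blocks_through B x2| = lam.
Proof.
have [_ _ _ pairs _] := design; move=> /pairs <-; apply: eq_card => Y.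
by rewrite !inE; case: (Y \in B).
Qed.

Lemma card_blocks_through_mul (x : X) :
  #|blocks_through B x| * (k - 1) = lam * (v - 1).
Proof.
have [cardX _ cardY _ _] := design.
have := double_count [set~ x] (blocks_through B x) (fun x2 Y => x2 \in Y).
rewrite (eq_bigr (fun _ => lam)) => [|x2]; last first.
  rewrite !inE eq_sym => /card_blocks_through_inter <-.
  by apply: eq_card => Y; rewrite !inE; case: (Y \in B).
rewrite sum_nat_const cardsC1 cardX mulnC -subn1 => ->.
rewrite -sum_nat_const; apply: eq_bigr => Y.
rewrite inE => /andP[YB xY]; rewrite -(cardY Y YB) (cardsD1 x Y) xY add1n subn1 /=.
by apply: eq_card => x2; rewrite !inE andbC.
Qed.

Lemma card_blocks_through (x : X) : 2 <= k -> #|blocks_through B x| = k.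
Proof.
move=> k_ge2; have [cardX cardB cardY _ _] := design.
have v_gt0 : 0 < v by rewrite -cardX; apply/card_gt0P; exists x.
have r_const y : #|blocks_through B y| = #|blocks_through B x|.
  apply/eqP; rewrite -(@eqn_pmul2r (k - 1)) ?subn_gt0 //.
  by rewrite !card_blocks_through_mul.
have := double_count [set: X] B (fun y Y => y \in Y).
rewrite (eq_bigr (fun=> #|blocks_through B x|)) => [|y _]; last exact: r_const.
rewrite sum_nat_const cardsT cardX (eq_bigr (fun=> k)) => [|Y YB].
  by rewrite sum_nat_const cardB => /eqP; rewrite eqn_pmul2l // => /eqP.
by rewrite -(cardY Y YB); apply: eq_card => y; rewrite !inE.
Qed.

Lemma card_symdiff_blocks_through (x1 x2 : X) : 2 <= k -> x1 != x2 ->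
  #|symdiff (blocks_through B x1) (blocks_through B x2)| = 2 * (k - lam).
Proof.
move=> k_ge2 neq_x12.
by apply: card_symdiff; rewrite ?card_blocks_through ?card_blocks_through_inter.
Qed.

Lemma card_symdiff_blocks (Y1 Y2 : {set X}) : Y1 \in B -> Y2 \in B -> Y1 != Y2 ->
  #|symdiff Y1 Y2| = 2 * (k - lam).
Proof.
have [_ _ cardY _ inter] := design => Y1B Y2B neqY.
exact: card_symdiff (cardY _ Y1B) (cardY _ Y2B) (inter _ _ Y1B Y2B neqY).
Qed.

Lemma block_size_le : 0 < v -> k <= v.
Proof.
have [cardX cardB cardY _ _] := design => v_gt0.
have [Y YB] : exists Y, Y \in B by apply/card_gt0P; rewrite cardB.
by rewrite -(cardY _ YB) -cardX max_card.
Qed.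

Lemma twice_block_size_le : 2 <= v -> 2 * k <= v + lam.
Proof.
have [cardX cardB cardY _ inter] := design => v_ge2.
have [Y1 [Y2 [Y1B Y2B neqY]]] : exists Y1 Y2, [/\ Y1 \in B, Y2 \in B & Y1 != Y2].
  by apply/card_gt1P; rewrite cardB.
have := subset_leq_card (subsetIl Y1 Y2); have := max_card (Y1 :|: Y2).
by rewrite cardsU (cardY _ Y1B) (cardY _ Y2B) (inter _ _ Y1B Y2B neqY) cardX; lia.
Qed.

Lemma double_order_le : 0 < v -> 2 <= k -> 2 * (k - lam) <= v.
Proof.
move=> v_gt0 k_ge2; have := block_size_le v_gt0.
by have := twice_block_size_le; lia.
Qed.

Lemma design_order_bound : 2 <= k - lam -> 0 < v ->
  v <= (k - lam) * (k - lam) + (k - lam) + 1.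
Proof.
have [cardX _ _ _ _] := design => q_ge2 v_gt0.
have k_ge2 : 2 <= k by lia.
have /card_gt0P[x _] : 0 < #|X| by rewrite cardX.
have k_le_v := block_size_le v_gt0.
apply: le_order_of_params.
- by rewrite -{1}(card_blocks_through x k_ge2) card_blocks_through_mul.
- lia.
- by apply: twice_block_size_le; lia.
Qed.

End SymmetricDesign.

Section IncidenceDistance.

Variables (X : finType) (B : {set {set X}}).

Lemma walk_n0 (u w : inc_vertex X) : walk_n B 0 u w = (u == w).
Proof.
apply/existsP/eqP => [[p /andP[_ /eqP <-]] | ->]; first by rewrite tuple0.
by exists [tuple]; rewrite /= eqxx.
Qed.

Lemma walk_n1 (u w : inc_vertex X) : walk_n B 1 u w = inc_adj B u w.
Proof.
apply/existsP/idP => [[[[|z [|? ?]] //= _]] | adj_uw].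
  by rewrite andbT => /andP[? /eqP <-].
by exists [tuple w]; rewrite /= adj_uw eqxx.
Qed.

Lemma inc_dist_eq1 (u w : inc_vertex X) :
  u != w -> (inc_dist B u w == 1) = inc_adj B u w.
Proof.
move=> neq_uw; have : 1 < #|inc_vertex X| by apply/card_gt1P; exists u, w.
rewrite /inc_dist; case: #|_| => [|[|n]] //= _.
by rewrite walk_n0 (negbTE neq_uw) walk_n1; case: inc_adj.
Qed.

Lemma inc_dist_neq (u1 u2 w : inc_vertex X) : u1 != w -> u2 != w ->
  inc_adj B u1 w != inc_adj B u2 w -> inc_dist B u1 w != inc_dist B u2 w.
Proof.
by move=> neq1 neq2; apply: contra => /eqP eq_dist; rewrite -!inc_dist_eq1 // eq_dist.
Qed.

Lemma split_resolving_of_separating (SX : {set X}) (SY : {set {set X}}) :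
  SY \subset B ->
  (forall x1 x2, x1 != x2 -> exists2 Y, Y \in SY &
     Y \in symdiff (blocks_through B x1) (blocks_through B x2)) ->
  (forall Y1 Y2, Y1 \in B -> Y2 \in B -> Y1 != Y2 -> exists2 x, x \in SX &
     x \in symdiff Y1 Y2) ->
  split_resolving B SX SY.
Proof.
move=> sSYB sepX sepB.
split=> // [x1 x2 /sepX[Y SY_Y] | Y1 Y2 Y1B Y2B /(sepB _ _ Y1B Y2B)[x SXx]].
  by rewrite in_symdiff !inE => sepY; exists Y => //; apply: inc_dist_neq.
by rewrite in_symdiff => sepx; exists x => //; apply: inc_dist_neq; rewrite //= Y1B Y2B.
Qed.

End IncidenceDistance.

Local Open Scope ring_scope.

Section ExpBounds.

Variable R : realType.

Lemma expR2_ge7 : 7 <= expR (2 : R).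
Proof.
have -> : (2 : R) = 64%:R * 32^-1 by rewrite -[64%:R]/(64 : R); lra.
rewrite expRM_natl; have base : 33 / 32 <= expR (32^-1 : R).
  by have := expR_ge1Dx (32^-1 : R); lra.
apply: le_trans (lerXn2r 64 _ _ base); rewrite ?nnegrE ?divr_ge0 ?expR_ge0 //.
by rewrite expr_div_n ler_pdivlMr ?exprn_gt0 // -!natrX -natrM ler_nat; lia.
Qed.

Lemma order_poly_le_expR (q : nat) :
  (2 <= q)%N -> (q * q + q + 1)%:R <= expR (q%:R : R).
Proof.
elim: q => [//|q IHq]; rewrite leq_eqVlt => /orP[/eqP <- | q_ge2].
  exact: le_trans (expR2_ge7).
have e_ge2 : 2 <= expR (1 : R) by have := expR_ge1Dx (1 : R); lra.
rewrite -[in expR _]natr1 expRD (le_trans _ (ler_pM _ _ (IHq q_ge2) e_ge2)) //.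
by rewrite -natrM ler_nat; nia.
Qed.

Lemma ln_le_of_le_order (v q : nat) : (2 <= q)%N -> (0 < v <= q * q + q + 1)%N ->
  ln (v%:R : R) <= q%:R.
Proof.
move=> q_ge2 /andP[v_gt0 le_v].
rewrite -[leRHS]expRK ler_ln ?posrE ?expR_gt0 ?ltr0n //.
by apply: le_trans; last exact: order_poly_le_expR q_ge2; rewrite ler_nat.
Qed.

(* (1 - m/n)^c <= exp(-cm/n) <= exp(-2 ln n) = 1/n^2 *)
Lemma mul_sq_expn_subn_le (n m c : nat) : (0 < n)%N -> (m <= n)%N ->
  2 * n%:R * ln n%:R <= c%:R * m%:R :> R -> (n * n * (n - m) ^ c <= n ^ c)%N.
Proof.
move=> n_gt0 le_mn le_c.
rewrite -(ler_nat R) !natrM !natrX natrB //.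
set N := (n%:R : R); set t := m%:R / N.
have N_gt0 : 0 < N by rewrite ltr0n.
have -> : N - m%:R = N * (1 - t) by rewrite /t; field; rewrite gt_eqF.
have t_le1 : 0 <= 1 - t by rewrite subr_ge0 /t ler_pdivrMr // mul1r ler_nat.
have decay : (1 - t) ^+ c <= (N * N)^-1.
  have le_exp : 1 - t <= expR (- t) by have := expR_ge1Dx (- t); lra.
  apply: le_trans (lerXn2r c _ _ le_exp) _; rewrite ?nnegrE ?expR_ge0 //.
  rewrite -expRM_natl -[(N * N)^-1]lnK ?posrE ?invr_gt0 ?mulr_gt0 // ler_expR.
  rewrite lnV ?posrE ?mulr_gt0 // lnM ?posrE // mulrN lerN2 mulrA ler_pdivlMr //.
  by have : 2 * N * ln N <= c%:R * m%:R := le_c; lra.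
rewrite exprMn mulrA (mulrC (N * N)) -mulrA ler_piMr ?exprn_ge0 ?(ltW N_gt0) //.
by rewrite -ler_pdivlMl ?mulr_gt0 // mulr1.
Qed.

End ExpBounds.

Lemma ceil_nat_between (R : archiRealFieldType) (r : R) (n : nat) : 0 <= r <= n%:R ->
  exists c : nat, [/\ Num.ceil r = c%:Z, r <= c%:R & (c <= n)%N].
Proof.
move=> /andP[r_ge0 r_le_n].
have [c def_c] : exists c : nat, Num.ceil r = c%:Z.
  by exists `|Num.ceil r|%N; rewrite gez0_abs // ceil_ge0 (lt_le_trans _ r_ge0) ?ltrN10.
exists c; split => //; first by have := ceil_ge r; rewrite def_c.
by rewrite -lez_nat -def_c ceil_le_int.
Qed.

Lemma exists_hitting_set_of_card (R : realType) (T I : finType) (U : {set T})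
    (P : {set I}) (D : I -> {set T}) (m c : nat) :
  (forall i, i \in P -> D i \subset U /\ (m <= #|D i|)%N) ->
  (#|P| < #|U| * #|U|)%N -> (m <= #|U|)%N -> (c <= #|U|)%N ->
  2 * #|U|%:R * ln #|U|%:R <= c%:R * m%:R :> R ->
  exists2 S : {set T}, S \subset U /\ #|S| = c &
    forall i, i \in P -> exists2 x, x \in S & x \in D i.
Proof.
move=> hD lt_PU le_mU le_cU le_c.
have U_gt0 : (0 < #|U|)%N by move: lt_PU; case: #|U|.
have count : (#|P| * (#|U| - m) ^ c < #|U| ^ c)%N.
  have [-> | miss_gt0] := posnP ((#|U| - m) ^ c); first by rewrite muln0 expn_gt0 U_gt0.
  by apply: leq_trans (mul_sq_expn_subn_le U_gt0 le_mU le_c); rewrite ltn_pmul2r.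
have [S0 [sS0U le_S0c] hits] := exists_small_hitting_set hD count.
have [|S sS0S [sSU cardS]] := exists_between_card (c := c) sS0U; first by rewrite le_S0c.
exists S => // i Pi; have [x S0x Dix] := hits i Pi.
by exists x => //; apply: (subsetP sS0S).
Qed.

Section SeparatingSets.

Variables (R : realType) (X : finType) (B : {set {set X}}) (v k lam c : nat).
Hypotheses (design : symmetric_design B v k lam) (q_ge2 : (2 <= k - lam)%N).
Hypotheses (v_gt0 : (0 < v)%N) (c_le_v : (c <= v)%N).
Hypothesis c_large : 2 * v%:R * ln v%:R <= c%:R * (2 * (k - lam))%:R :> R.

Lemma exists_points_separating_blocks :
  exists2 SX : {set X}, #|SX| = c & forall Y1 Y2, Y1 \in B -> Y2 \in B -> Y1 != Y2 ->
    exists2 x, x \in SX & x \in symdiff Y1 Y2.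
Proof.
have [cardX cardB _ _ _] := design.
have [|||||SX [_ cardSX] sep] := exists_hitting_set_of_card (R := R) (U := [set: X])
  (P := offdiag B) (D := fun Ys => symdiff Ys.1 Ys.2) (m := (2 * (k - lam))%N) (c := c).
- move=> [Y1 Y2]; rewrite !inE /= => /andP[/andP[Y1B Y2B] neqY].
  by rewrite subsetT (card_symdiff_blocks design).
- by rewrite cardsT cardX -cardB card_offdiag_lt ?cardB.
- by rewrite cardsT cardX (double_order_le design) //; lia.
- by rewrite cardsT cardX.
- by rewrite cardsT cardX.
by exists SX => // Y1 Y2 Y1B Y2B neqY; apply: (sep (Y1, Y2)); rewrite !inE Y1B Y2B.
Qed.

Lemma exists_blocks_separating_points :
  exists2 SY : {set {set X}}, SY \subset B /\ #|SY| = c & forall x1 x2, x1 != x2 ->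
    exists2 Y, Y \in SY & Y \in symdiff (blocks_through B x1) (blocks_through B x2).
Proof.
have [cardX cardB _ _ _] := design.
have [|||||SY sSY sep] := exists_hitting_set_of_card (R := R) (U := B)
  (P := offdiag [set: X]) (m := (2 * (k - lam))%N) (c := c)
  (D := fun xs => symdiff (blocks_through B xs.1) (blocks_through B xs.2)).
- move=> [x1 x2]; rewrite !inE /= => neqx; split.
    by apply/subsetP => Y; rewrite in_symdiff !inE; case: (Y \in B).
  by rewrite (card_symdiff_blocks_through design) //; lia.
- by rewrite cardB -cardX -cardsT card_offdiag_lt // cardsT cardX.
- by rewrite cardB (double_order_le design) //; lia.
- by rewrite cardB.
- by rewrite cardB.
by exists SY => // x1 x2 neqx; apply: (sep (x1, x2)); rewrite !inE.
Qed.

End SeparatingSets.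

Theorem corollary2p6 (R : realType) (X : finType) (B : {set {set X}})
    (v k lam : nat) :
  symmetric_design B v k lam -> (2 <= k - lam)%N ->
  exists (SX : {set X}) (SY : {set {set X}}),
    split_resolving B SX SY /\
    ((#|SX| + #|SY|)%N)%:Z =
      2 * Num.ceil ((v%:R : R) * ln (v%:R : R) / ((k - lam)%N)%:R).
Proof.
move=> design q_ge2; have [cardX cardB _ _ _] := design.
have [v0 | v_gt0] := posnP v.
  exists set0, set0; split; last by rewrite !cards0 v0 !mul0r ceil0.
  apply: split_resolving_of_separating => [|x1 |Y1]; rewrite ?sub0set //.
    by have := card0_eq (etrans cardX v0) x1; rewrite inE.
  by rewrite (cards0_eq (etrans cardB v0)) inE.
have q_gt0 : 0 < ((k - lam)%N)%:R :> R by rewrite ltr0n; lia.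
have ln_v_le : ln v%:R <= ((k - lam)%N)%:R :> R.
  by apply: ln_le_of_le_order; rewrite // v_gt0 (design_order_bound design).
have [|c [ceil_c ge_c le_cv]] :=
    @ceil_nat_between R (v%:R * ln v%:R / ((k - lam)%N)%:R) v.
  by rewrite divr_ge0 ?mulr_ge0 ?ln_ge0 ?ler1n //= ler_pdivrMr // ler_wpM2l.
have c_large : 2 * v%:R * ln v%:R <= c%:R * (2 * (k - lam))%:R :> R.
  by move: ge_c; rewrite ler_pdivrMr // natrM; lra.
have [SX cardSX sepB] :=
  exists_points_separating_blocks design q_ge2 v_gt0 le_cv c_large.
have [SY [sSYB cardSY] sepX] :=
  exists_blocks_separating_points design q_ge2 v_gt0 le_cv c_large.
exists SX, SY; split; first exact: split_resolving_of_separating.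
by rewrite cardSX cardSY ceil_c; lia.
Qed.
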